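(* Let $n\ge1$, $m\ge1$, and let $d_1,\dots,d_m\in(0,1)\cap\mathbb{Q}$ with $\sum_{i=1}^m d_i<n+1$. Let $\mathcal{X}=\mathbb{P}^n\times\mathbb{P}^1$, with projections $\mathrm{pr}_1:\mathcal{X}\to\mathbb{P}^n$ and $\mathrm{pr}_2:\mathcal{X}\to\mathbb{P}^1$. Let $h$ be the hyperplane class of $\mathbb{P}^n$ and $l$ the point class of $\mathbb{P}^1$. Let $$\mathcal{D}=\sum_{i=1}^{m-1}d_i\,(H_i\times\mathbb{P}^1)+d_m\,\mathcal{H},$$ where $H_1,\dots,H_{m-1}\subset\mathbb{P}^n$ are fixed hyperplanes and $\mathcal{H}\subset\mathcal{X}$ is a divisor of class $\mathrm{pr}_1^*h+\mathrm{pr}_2^*l$ whose fibres are hyperplanes moving with $t\in\mathbb{P}^1$. Assume the hyperplanes are in general position. Consider the family $\mathrm{pr}_2:(\mathcal{X},\mathcal{D})\to\mathbb{P}^1$ with relative polarization $\mathcal{L}=-K_{\mathcal{X}/\mathbb{P}^1}-\mathcal{D}$. Then $$\deg c_1(\lambda_{\mathrm{CM},\mathcal{D}})=(n+1)\,d_m\Big(n+1-\sum_{i=1}^m d_i\Big)^n.$$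
   Context: For a $\mathbb{Q}$-Gorenstein flat family $f:(\mathcal{X},\mathcal{D})\to B$ of $n$-dimensional pairs over a normal proper variety $B$, with $f$-ample $\mathbb{Q}$-line bundle $\mathcal{L}$ and $\mathcal{D}=\sum_k d_k\mathcal{D}_k$, the first Chern class of the log CM $\mathbb{Q}$-line bundle is $$c_1(\lambda_{\mathrm{CM},\mathcal{D}})=n\frac{(-K_{\mathcal{X}_b}-\mathcal{D}_b)\cdot\mathcal{L}_b^{n-1}}{(\mathcal{L}_b^n)}f_*c_1(\mathcal{L})^{n+1}-(n+1)f_*\big((-K_{\mathcal{X}/B}-\mathcal{D})\cdot c_1(\mathcal{L})^n\big).$$ For $\mathcal{L}=-K_{\mathcal{X}/B}-\mathcal{D}$ this equals $-f_*c_1(\mathcal{L})^{n+1}$. When $B=\mathbb{P}^1$ this is a class on a curve, identified with its degree. *)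

From HB Require Import structures.
From mathcomp Require Import all_boot all_order all_algebra.
Set Implicit Arguments. Unset Strict Implicit. Unset Printing Implicit Defensive.
Import Order.TTheory GRing.Theory Num.Theory.
Local Open Scope ring_scope.

(* The rational Chow ring A^*(P^n x P^1)_Q = Q[h,l]/(h^(n+1), l^2), with
   h = pr1^* (hyperplane class), l = pr2^* (point class).
   A class is represented by a polynomial in h whose coefficients are
   polynomials in l: the coefficient of h^i l^j of a is (a`_i)`_j.
   Since the relations are monomial, coefficient extraction in degrees
   i <= n, j <= 1 is compatible with the quotient, so we never need to
   reduce explicitly. *)
Notation chow := {poly {poly rat}}.
Definition cst (c : rat) : chow := c%:P%:P.
Definition hcl : chow := 'X.
Definition lcl : chow := ('X)%:P.

(* degree of a codimension-(n+1) class on X (h^n l |-> 1), which is the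
   degree of its pushforward pr2_* to P^1 *)
Definition push_deg (n : nat) (a : chow) : rat := (a`_n)`_1.
(* degree of the restriction to a fibre P^n of a codimension-n class
   (h^n |-> 1, l |-> 0) *)
Definition fib_deg (n : nat) (a : chow) : rat := (a`_n)`_0.

(* relative canonical class K_{X/P^1} = pr1^* K_{P^n} = -(n+1) h *)
Definition K_rel (n : nat) : chow := - (n.+1)%:R * hcl.

(* Boundary D = sum_{i=1}^{m-1} d_i (H_i x P^1) + d_m Hcal, with
   [H_i x P^1] = pr1^* h and [Hcal] = pr1^* h + pr2^* l. *)
Definition bdry (m : nat) (d : nat -> rat) : chow :=
  \sum_(1 <= i < m) cst (d i) * hcl + cst (d m) * (hcl + lcl).

(* degree of c_1 of the log CM Q-line bundle of the family pr2 : (X,D) -> P^1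
   with polarization L (n-dimensional fibres), as in the context formula *)
Definition cm_deg (n : nat) (K D L : chow) : rat :=
  n%:R * (fib_deg n ((- K - D) * L ^+ n.-1) / fib_deg n (L ^+ n))
       * push_deg n (L ^+ n.+1)
  - (n.+1)%:R * push_deg n ((- K - D) * L ^+ n).

(* Write L = -K_{X/P^1} - D = a h + e l with a = n + 1 - sum_i d_i and e = -d_m.
   With L itself as polarization, the first term of the CM degree has the
   factor (L^n)_b / (L^n)_b = 1, so the degree collapses to -deg pr2_* L^(n+1).
   Expanding binomially, (a h + e l)^(n+1) has h^n l-coefficient (n+1) a^n e,
   and the fibre volume a^n is nonzero because sum_i d_i < n + 1. *)
From mathcomp Require Import all_boot all_order all_algebra ring.
Import Order.TTheory GRing.Theory Num.Theory.
Local Open Scope ring_scope.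

Lemma coef_linear_exp (R : comNzRingType) (c b : R) n i :
  ((c%:P * 'X + b%:P) ^+ n)`_i = c ^+ i * b ^+ (n - i) *+ 'C(n, i).
Proof.
rewrite addrC exprDn coef_sum.
under eq_bigr => j _ do rewrite exprMn -!rmorphXn mulrA -rmorphM coefMn coefCM
  coefXn mulr_natr mulrb eq_sym (fun_if (fun x => x *+ 'C(n, j))) mul0rn.
rewrite -big_mkcond (big_ord1_eq _ (fun j => b ^+ (n - j) * c ^+ j *+ 'C(n, j))).
rewrite ltnS; case: leqP => [_ | /bin_small->]; last by rewrite !mulr0n.
by rewrite mulrC.
Qed.

Lemma fib_deg_linear_exp n (a e : rat) :
  fib_deg n ((cst a * hcl + cst e * lcl) ^+ n) = a ^+ n.
Proof.
rewrite /fib_deg /cst /hcl /lcl -rmorphM coef_linear_exp subnn expr0 mulr1.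
by rewrite binn mulr1n -rmorphXn coefC.
Qed.

Lemma push_deg_linear_exp n (a e : rat) :
  push_deg n ((cst a * hcl + cst e * lcl) ^+ n.+1) = a ^+ n * e *+ n.+1.
Proof.
rewrite /push_deg /cst /hcl /lcl -rmorphM coef_linear_exp subSnn expr1 binSn.
by rewrite coefMn -rmorphXn coefCM coefCM coefX mulr1.
Qed.

Lemma cm_deg_log_anticanonical n (K D : chow) : (0 < n)%N ->
  fib_deg n ((- K - D) ^+ n) != 0 ->
  cm_deg n K D (- K - D) = - push_deg n ((- K - D) ^+ n.+1).
Proof.
rewrite /cm_deg; case: n => // k _ vol_neq0.
rewrite -exprS divff // mulr1 -exprS -[(k.+2)%:R]natr1.
ring.
Qed.

Lemma log_anticanonicalE n m (d : nat -> rat) : (0 < m)%N ->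
  - K_rel n - bdry m d
  = cst ((n.+1)%:R - \sum_(1 <= i < m.+1) d i) * hcl + cst (- d m) * lcl.
Proof.
move=> m_gt0; rewrite big_nat_recr //= /K_rel /bdry /cst -mulr_suml -!rmorph_sum.
rewrite !rmorphB !rmorphD !rmorphN /= !rmorph_nat.
ring.
Qed.

Theorem mainTheorem3 (n m : nat) (hn : (1 <= n)%N) (hm : (1 <= m)%N)
  (d : nat -> rat)
  (hd : forall i, (1 <= i <= m)%N -> 0 < d i < 1)
  (hsum : \sum_(1 <= i < m.+1) d i < n.+1%:R) :
  cm_deg n (K_rel n) (bdry m d) (- K_rel n - bdry m d)
  = (n.+1)%:R * d m * ((n.+1)%:R - \sum_(1 <= i < m.+1) d i) ^+ n.
Proof.
set a := (n.+1)%:R - _.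
have a_neq0 : a != 0 by rewrite subr_eq0 gt_eqF.
have vol_neq0 : fib_deg n ((- K_rel n - bdry m d) ^+ n) != 0.
  by rewrite log_anticanonicalE // fib_deg_linear_exp expf_neq0.
rewrite cm_deg_log_anticanonical // log_anticanonicalE // push_deg_linear_exp.
by rewrite -mulr_natl; ring.
Qed.
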